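(* Let $X$ be a finite set, $t_1<\dots<t_M$ real numbers and $(\mathcal{P}^{t_m})_{m\le M}$ partitions of $X$, with associated continuous-indexed Multiscale Clustering Filtration $(K^t)_{t\ge t_1}$ and partitions $\mathcal{P}^t$. For each $t\ge t_1$, the $0$-th Betti number $\beta_0^t$ of $K^t$ satisfies: (i) $\beta_0^t\le \min_{s\le t}\#\mathcal{P}^s$; (ii) $\beta_0^t=\#\mathcal{P}^t$ if and only if $\mathcal{P}^t$ is non-fractured.
   Context: A partition of $X$ is a collection of non-empty pairwise disjoint subsets (clusters) whose union is $X$; $\#\mathcal{P}$ is its number of clusters. For partitions $\mathcal{P},\mathcal{Q}$, $\mathcal{P}\le\mathcal{Q}$ ($\mathcal{P}$ refines $\mathcal{Q}$) means every cluster of $\mathcal{P}$ is contained in a cluster of $\mathcal{Q}$. For a finite non-empty set $C$, $\Delta C$ is the set of all non-empty subsets of $C$. The MCF is $K^{t_m}:=\bigcup_{l\le m}\bigcup_{C\in\mathcal{P}^{t_l}}\Delta C$. For real $t$, set $\mathcal{P}^t:=\mathcal{P}^{t_m}$ where $m$ is the largest index with $t_m\le t$ (and $\mathcal{P}^t:=\mathcal{P}^{t_1}$ if $t<t_1$), and for $t\ge t_1$ set $K^t:=K^{t_m}$ with the same $m$. $\beta_0^t$ is the rank of $H_0(K^t)$, i.e. the number of connected components of $K^t$. The partition $\mathcal{P}^t$ is non-fractured if $\mathcal{P}^s\le\mathcal{P}^t$ for all $s\le t$, and fractured otherwise. *)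

From HB Require Import structures.
From mathcomp Require Import all_boot all_order all_algebra.
From mathcomp Require Import reals.
Set Implicit Arguments. Unset Strict Implicit. Unset Printing Implicit Defensive.
Import Order.TTheory GRing.Theory Num.Theory.
Local Open Scope ring_scope.

(* Convention: the M time points t_1 < ... < t_M are indexed by 'I_M.+1
   (so there are M.+1 >= 1 of them; ord0 is t_1).  *)

Section MCF.
Variables (R : realType) (X : finType) (M : nat).
Variable (tm : 'I_M.+1 -> R).
Variable (P : 'I_M.+1 -> {set {set X}}).

(* largest index m with t_m <= s (0, i.e. t_1, if there is none) *)
Definition mcf_idx (s : R) : 'I_M.+1 :=
  inord (\max_(i < M.+1 | (tm i <= s)%R) (i : nat))%N.

Definition mcf_part (s : R) : {set {set X}} := P (mcf_idx s).

Definition mcf_complex (s : R) : {set {set X}} :=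
  [set S : {set X} | (S != set0) &&
     [exists l : 'I_M.+1, (l <= mcf_idx s)%N &&
        [exists C in P l, S \subset C]]].
End MCF.

(* Number of connected components of an (abstract simplicial) complex K,
   given as its set of simplices: classes of vertices under the
   equivalence generated by "lying in a common simplex". *)
Definition simplex_adj (X : finType) (K : {set {set X}}) : rel X :=
  fun x y => [exists S in K, (x \in S) && (y \in S)].

Definition n_components (X : finType) (K : {set {set X}}) : nat :=
  #|[set [set y | connect (simplex_adj K) x y] | x in \bigcup_(S in K) S]|.

Definition mcf_beta0 (R : realType) (X : finType) (M : nat)
  (tm : 'I_M.+1 -> R) (P : 'I_M.+1 -> {set {set X}}) (s : R) : nat :=
  n_components (mcf_complex tm P s).

Definition refines (X : finType) (A B : {set {set X}}) : bool :=
  [forall C in A, exists D in B, C \subset D].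

Definition non_fractured (R : realType) (X : finType) (M : nat)
  (tm : 'I_M.+1 -> R) (P : 'I_M.+1 -> {set {set X}}) (t : R) : Prop :=
  forall s : R, s <= t -> refines (mcf_part tm P s) (mcf_part tm P t).

From HB Require Import structures.
From mathcomp Require Import all_boot all_order all_algebra.
From mathcomp Require Import reals.
Set Implicit Arguments. Unset Strict Implicit. Unset Printing Implicit Defensive.
Import Order.TTheory GRing.Theory Num.Theory.
Local Open Scope ring_scope.

(* Every cluster of P^{t_l} with t_l <= t is a simplex of K^t, so each
   connected component of K^t is a union of clusters of P^s for every s <= t;
   hence there are at most #P^s components.  There are exactly #P^t of them
   iff the components are the clusters of P^t, i.e. iff every simplex of K^t
   lies in a cluster of P^t, which says that every earlier partition refines
   P^t. *)

Lemma imset_pblock (T : finType) (P : {set {set T}}) (D : {set T}) :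
  partition P D -> pblock P @: D = P.
Proof.
case/and3P=> /eqP <- tiP notP0; apply/setP=> B; apply/imsetP/idP.
  by case=> x Px ->; apply: pblock_mem.
move=> PB; have /set0Pn [x Bx] : B != set0 by apply: contraNneq notP0 => <-.
by exists x; [apply/bigcupP; exists B | rewrite (def_pblock tiP PB Bx)].
Qed.

Lemma refines_pblock (T : finType) (A B : {set {set T}}) (C : {set T}) x y :
  trivIset B -> refines A B -> C \in A -> x \in C -> y \in C ->
  pblock B x = pblock B y.
Proof.
move=> tiB /forall_inP AB AC xC yC; have /exists_inP [D BD CD] := AB C AC.
by rewrite !(def_pblock tiB BD) ?(subsetP CD).
Qed.

Section BlockConstantImage.

Variables (T rT : finType) (P : {set {set T}}) (D : {set T}).
Variable f : T -> rT.
Hypothesis partP : partition P D.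
Hypothesis f_block : {in P, forall B : {set T}, {in B &, forall x y, f x = f y}}.

Let g (B : {set T}) := f @: B.

Let g_pblock x : x \in D -> g (pblock P x) = [set f x].
Proof.
case/and3P: partP => /eqP covP _ _ Dx.
have xPx : x \in pblock P x by rewrite mem_pblock covP.
have PxP : pblock P x \in P by rewrite pblock_mem ?covP.
apply/setP=> z; apply/imsetP/set1P=> [[y yPx ->] | ->]; last by exists x.
exact: f_block _ PxP _ _ yPx xPx.
Qed.

Let card_imset_block_constant : #|f @: D| = #|g @: P|.
Proof.
rewrite -(card_imset _ (@set1_inj _)) -imset_comp -(imset_pblock partP).
by rewrite -imset_comp (@eq_in_imset _ _ (g \o pblock P) (set1 \o f) _ g_pblock).
Qed.

Lemma leq_card_imset_partition : (#|f @: D| <= #|P|)%N.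
Proof. by rewrite card_imset_block_constant leq_imset_card. Qed.

Lemma card_imset_partition :
  #|f @: D| = #|P| <-> {in D &, forall x y, f x = f y -> pblock P x = pblock P y}.
Proof.
have [/eqP covP _ _] := and3P partP.
rewrite card_imset_block_constant; split=> [/eqP/imset_injP g_inj | f_sep].
  move=> x y Dx Dy fxy; apply: g_inj; rewrite ?pblock_mem ?covP //.
  by rewrite !g_pblock // fxy.
apply/eqP/imset_injP=> B1 B2; rewrite -(imset_pblock partP).
case/imsetP=> x1 Dx1 -> /imsetP [x2 Dx2 ->].
by rewrite !g_pblock // => /set1_inj; apply: f_sep.
Qed.

End BlockConstantImage.

Section Components.

Variables (X : finType) (K : {set {set X}}).

Definition component (x : X) : {set X} := [set y | connect (simplex_adj K) x y].

Lemma simplex_adj_sym : symmetric (simplex_adj K).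
Proof.
by move=> x y; apply/exists_inP/exists_inP=> -[S SK /andP [xS yS]];
  exists S; rewrite ?SK ?xS ?yS.
Qed.

Lemma component_eq x y :
  component x = component y <-> connect (simplex_adj K) x y.
Proof.
split=> [cxy | xy].
  have : y \in component y by rewrite inE connect0.
  by rewrite -cxy inE.
apply/setP=> z; rewrite !inE.
exact: (same_connect (sym_connect_sym simplex_adj_sym) xy z).
Qed.

Lemma n_componentsE : cover K = [set: X] -> n_components K = #|component @: [set: X]|.
Proof. by rewrite /n_components => <-. Qed.

End Components.

Section MultiscaleClusteringFiltration.

Variables (R : realType) (X : finType) (M : nat).
Variables (tm : 'I_M.+1 -> R) (P : 'I_M.+1 -> {set {set X}}).
Hypothesis htm : forall i j : 'I_M.+1, (i < j)%N -> tm i < tm j.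
Hypothesis hP : forall m : 'I_M.+1, partition (P m) [set: X].

Lemma le_tm (i j : 'I_M.+1) : (i <= j)%N -> tm i <= tm j.
Proof. by rewrite leq_eqVlt => /predU1P [/val_inj -> | /htm/ltW]. Qed.

Lemma mcf_idxE s : mcf_idx tm s = \max_(i < M.+1 | tm i <= s) i :> nat.
Proof. by rewrite inordK // ltnS; apply/bigmax_leqP => i _; rewrite -ltnS. Qed.

Lemma le_mcf_idx s t : s <= t -> (mcf_idx tm s <= mcf_idx tm t)%N.
Proof.
move=> st; rewrite !mcf_idxE; apply/bigmax_leqP => i tis.
by apply: leq_bigmax_cond; apply: le_trans st.
Qed.

Lemma mcf_idx_tm l : mcf_idx tm (tm l) = l.
Proof.
apply/val_inj/eqP; rewrite /= mcf_idxE eqn_leq leq_bigmax_cond // andbT.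
by apply/bigmax_leqP => i; apply: contraTT; rewrite -ltnNge -ltNge => /htm.
Qed.

Lemma tm_mcf_idx_le t : tm ord0 <= t -> tm (mcf_idx tm t) <= t.
Proof.
move=> t0t; have [|i tit idx_i] := @eq_bigmax_cond _ (fun i => tm i <= t) val.
  by apply/card_gt0P; exists ord0.
by have -> : mcf_idx tm t = i by apply/val_inj; rewrite /= mcf_idxE.
Qed.

Variable t : R.
Let m := mcf_idx tm t.
Let K := mcf_complex tm P t.

Lemma mcf_block_simplex (l : 'I_M.+1) C : (l <= m)%N -> C \in P l -> C \in K.
Proof.
move=> lm PC; have /and3P [_ _ notP0] := hP l.
rewrite inE (contraNneq _ notP0) => [|<- //]; apply/existsP; exists l.
by rewrite lm; apply/exists_inP; exists C.
Qed.

Lemma cover_mcf_complex : cover K = [set: X].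
Proof.
have /and3P [/eqP covP _ _] := hP m.
have Px x : x \in cover (P m) by rewrite covP.
apply/setP=> x; rewrite in_setT; apply/bigcupP; exists (pblock (P m) x).
  exact: mcf_block_simplex (leqnn m) (pblock_mem (Px x)).
by rewrite mem_pblock.
Qed.

Lemma mcf_beta0E : mcf_beta0 tm P t = #|component K @: [set: X]|.
Proof. exact: n_componentsE cover_mcf_complex. Qed.

Lemma component_mcf_block (l : 'I_M.+1) : (l <= m)%N ->
  {in P l, forall C : {set X}, {in C &, forall x y, component K x = component K y}}.
Proof.
move=> lm C PC x y xC yC; apply/component_eq/connect1/exists_inP.
by exists C; rewrite ?xC ?yC ?(mcf_block_simplex lm).
Qed.

Hypothesis t0t : tm ord0 <= t.

Lemma non_fractured_refines (l : 'I_M.+1) :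
  non_fractured tm P t -> (l <= m)%N -> refines (P l) (P m).
Proof.
move=> nf lm; have := nf (tm l) (le_trans (le_tm lm) (tm_mcf_idx_le t0t)).
by rewrite /mcf_part mcf_idx_tm.
Qed.

Lemma connect_mcf_pblock x y :
  (forall l : 'I_M.+1, (l <= m)%N -> refines (P l) (P m)) ->
  connect (simplex_adj K) x y -> pblock (P m) x = pblock (P m) y.
Proof.
move=> ref; have /and3P [_ tiP _] := hP m.
have adj_pblock u v : simplex_adj K u v -> pblock (P m) u = pblock (P m) v.
  case/exists_inP=> S; rewrite inE => /andP [_ /existsP [l /andP [lm]]].
  case/exists_inP=> C PC SC /andP [uS vS].
  exact: refines_pblock tiP (ref l lm) PC (subsetP SC u uS) (subsetP SC v vS).
have cl : closed (simplex_adj K) [pred z | pblock (P m) x == pblock (P m) z].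
  by move=> u v /adj_pblock uv; rewrite !inE uv.
by move/(closed_connect cl); rewrite !inE eqxx => /esym/eqP.
Qed.

Lemma non_fractured_of_connect :
  (forall x y, connect (simplex_adj K) x y -> pblock (P m) x = pblock (P m) y) ->
  non_fractured tm P t.
Proof.
move=> sep s st; apply/forall_inP=> C PC; have /and3P [/eqP covP _ _] := hP m.
have /and3P [_ _ notP0] := hP (mcf_idx tm s).
have /set0Pn [x xC] : C != set0 by apply: contraNneq notP0 => <-.
apply/exists_inP; exists (pblock (P m) x); first by rewrite pblock_mem ?covP.
apply/subsetP=> y yC; rewrite (sep x y) ?mem_pblock ?covP //.
have /component_mcf_block cxy := le_mcf_idx st.
by apply/component_eq; exact: cxy PC x y xC yC.
Qed.

End MultiscaleClusteringFiltration.

Theorem proposition3 (R : realType) (X : finType) (M : nat)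
  (tm : 'I_M.+1 -> R) (P : 'I_M.+1 -> {set {set X}})
  (htm : forall i j : 'I_M.+1, (i < j)%N -> tm i < tm j)
  (hP : forall m : 'I_M.+1, partition (P m) [set: X])
  (t : R) (ht : tm ord0 <= t) :
  (forall s : R, s <= t -> (mcf_beta0 tm P t <= #|mcf_part tm P s|)%N) /\
  (mcf_beta0 tm P t = #|mcf_part tm P t| <-> non_fractured tm P t).
Proof.
rewrite (mcf_beta0E tm hP t); split=> [s st | ].
  exact: leq_card_imset_partition (hP _) (component_mcf_block hP (le_mcf_idx tm st)).
apply: iff_trans (card_imset_partition (hP _) (component_mcf_block hP (leqnn _))) _.
split=> [sep | nf x y _ _ /component_eq].
  by apply: (non_fractured_of_connect hP) => x y /component_eq; apply: sep.
by apply: (connect_mcf_pblock hP) => l; exact: (non_fractured_refines htm ht nf).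
Qed.
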